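(* If $A$ is a finite set of relatively prime positive integers, then there exists an $\mathcal{N}$-set $K\subseteq\mathbb{R}$ such that $A=(K-K)\cap\mathbb{N}$.
   Context: $\mathbb{N}$ denotes the set of positive integers. $K-K=\{x-y : x,y\in K\}$. A set of integers is relatively prime if it is nonempty and its elements have no common factor greater than $1$. An $\mathcal{N}$-set in $\mathbb{R}^n$ is a compact set $K\subseteq\mathbb{R}^n$ such that for every $x\in\mathbb{R}^n$ there exists $y\in K$ with $x-y\in\mathbb{Z}^n$. *)

From Stdlib Require Export Reals Rtopology List Arith ZArith.
Open Scope R_scope.

Definition rel_prime_set (A : list nat) : Prop :=
  A <> nil /\ forall d : nat, (forall a, In a A -> Nat.divide d a) -> d = 1%nat.

Definition N_set (K : R -> Prop) : Prop :=
  compact K /\ forall x : R, exists y : R, K y /\ exists z : Z, x - y = IZR z.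

(* (K - K) ∩ N, with N = positive integers. *)
Definition diff_pos_nat (K : R -> Prop) (n : nat) : Prop :=
  (0 < n)%nat /\ exists x y : R, K x /\ K y /\ x - y = INR n.

(* Since gcd A = 1, Bézout writes every integer, in particular
   -1 - Σ A, as a sum of steps taken from ±A ∪ {0}.  Preceding these steps by
   one step +a for every a ∈ A (and appending a 0 step) gives an integer walk c_0 = 0, c_1, ..., c_N with c_N = c_0 - 1 in which
   every step lies in ±A ∪ {0} and every a ∈ A occurs as a non-final step.
   Put  K = ⋃_{j<N} { x | j <= N (x - c_j) <= j + 1 },  a union of N segments
   of length 1/N lifted by the integers c_j.  Their fractional parts tile
   [0,1), so K is an ℕ-set; two points of K differ by an integer only when
   they sit at a common endpoint of consecutive segments (cyclically, the wrap
   being absorbed by c_N = c_0 - 1), so the integer differences of K are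
   exactly 0 and the steps of the walk, up to sign. *)

From Stdlib Require Import Lia Lra.
Open Scope R_scope.

(* Compact subsets of ℝ are those that are closed and bounded, so a union of
   two of them is again compact. *)
Lemma compact_union (P Q : R -> Prop) :
  compact P -> compact Q -> compact (fun x => P x \/ Q x).
Proof.
  intros HP HQ.
  apply compact_carac in HP as [closedP [mP [MP boundP]]].
  apply compact_carac in HQ as [closedQ [mQ [MQ boundQ]]].
  apply compact_carac. split.
  - apply open_set_P6 with (intersection_domain (complementary P) (complementary Q)).
    + apply open_set_P3; assumption.
    + split; intros x Hx; unfold intersection_domain, complementary in *; tauto.
  - exists (Rmin mP mQ), (Rmax MP MQ). intros x [Hx|Hx].
    + specialize (boundP x Hx).
      pose proof (Rmin_l mP mQ). pose proof (Rmax_l MP MQ). lra.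
    + specialize (boundQ x Hx).
      pose proof (Rmin_r mP mQ). pose proof (Rmax_r MP MQ). lra.
Qed.

Lemma compact_finite_union (P : nat -> R -> Prop) (m : nat) :
  (forall j, (j < m)%nat -> compact (P j)) ->
  compact (fun x => exists j, (j < m)%nat /\ P j x).
Proof.
  induction m as [|m IH]; intros HP.
  - apply compact_eqDom with (fun _ => False); [apply compact_EMP|].
    split; intros x Hx; [contradiction | destruct Hx as [j [Hj _]]; lia].
  - apply compact_eqDom with (fun x => (exists j, (j < m)%nat /\ P j x) \/ P m x).
    + apply compact_union; [apply IH; intros j Hj|]; apply HP; lia.
    + split; intros x Hx.
      * destruct Hx as [[j [Hj Hx]]|Hx]; eauto.
      * destruct Hx as [j [Hj Hx]].
        destruct (Nat.eq_dec j m) as [->|Hjm]; [now right | left; exists j; split; [lia|auto]].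
Qed.

(* A segment described in scaled coordinates, lo <= r (x - a) <= hi with r > 0,
   is the closed interval [a + lo/r, a + hi/r], hence compact. *)
Lemma compact_scaled_segment (r a lo hi : R) :
  0 < r -> compact (fun x => lo <= r * (x - a) <= hi).
Proof.
  intros Hr. apply compact_eqDom with (fun x => a + lo / r <= x <= a + hi / r).
  - apply compact_P3.
  - assert (Hunscale : forall t, r * (a + t / r - a) = t) by (intros t; field; lra).
    split; intros x [H1 H2]; split.
    + rewrite <- (Hunscale lo). apply Rmult_le_compat_l; lra.
    + rewrite <- (Hunscale hi). apply Rmult_le_compat_l; lra.
    + apply (Rmult_le_reg_l r); [lra|].
      replace (r * (a + lo / r)) with (r * a + lo) by (field; lra). lra.
    + apply (Rmult_le_reg_l r); [lra|].
      replace (r * (a + hi / r)) with (r * a + hi) by (field; lra). lra.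
Qed.

Lemma wrap_offset (N i j : nat) (k : Z) :
  (i < N)%nat -> (j < N)%nat ->
  (Z.of_nat i - Z.of_nat j - 1 <= Z.of_nat N * k <= Z.of_nat i - Z.of_nat j + 1)%Z ->
  (k = 0%Z /\ (i = j \/ i = S j \/ j = S i))
  \/ (k = (-1)%Z /\ i = 0%nat /\ S j = N)
  \/ (k = 1%Z /\ S i = N /\ j = 0%nat).
Proof.
  intros Hi Hj Hk.
  assert (Hk1 : (-1 <= k <= 1)%Z) by (split; apply Z.nlt_ge; intros Hlt; nia).
  assert (Hcases : (k = -1 \/ k = 0 \/ k = 1)%Z) by lia.
  destruct Hcases as [-> | [-> | ->]]; lia.
Qed.

Section WalkSet.

Variables (N : nat) (c : nat -> Z).
Hypothesis N_pos : (0 < N)%nat.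
Hypothesis walk_wraps : c N = (c 0%nat - 1)%Z.

Definition walk_segment (j : nat) (x : R) : Prop :=
  INR j <= INR N * (x - IZR (c j)) <= INR (S j).

Definition walk_set (x : R) : Prop :=
  exists j, (j < N)%nat /\ walk_segment j x.

Lemma INR_N_pos : 0 < INR N.
Proof. apply lt_0_INR. exact N_pos. Qed.

Lemma walk_set_compact : compact walk_set.
Proof.
  apply compact_finite_union. intros j _.
  apply compact_scaled_segment, INR_N_pos.
Qed.

(* Every real x is congruent mod ℤ to a point of the walk set: if f is the
   fractional part of x and k = ⌊N f⌋, then c_k + f lies in segment k. *)
Lemma walk_set_covers (x : R) :
  exists y, walk_set y /\ exists z : Z, x - y = IZR z.
Proof.
  pose proof INR_N_pos as HN.
  set (f := x - IZR (Int_part x)).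
  assert (Hf : 0 <= f < 1) by (destruct (base_Int_part x); unfold f; lra).
  set (k := Int_part (INR N * f)).
  destruct (base_Int_part (INR N * f)) as [Hk_le Hk_gt]; fold k in Hk_le, Hk_gt.
  assert (Hk : (0 <= k < Z.of_nat N)%Z).
  { split.
    - assert (Hgt : (-1 < k)%Z) by (apply lt_IZR; nra). lia.
    - apply lt_IZR. rewrite <- INR_IZR_INZ.
      assert (INR N * f < INR N * 1) by (apply Rmult_lt_compat_l; lra). lra. }
  assert (Hj : INR (Z.to_nat k) = IZR k) by (rewrite INR_IZR_INZ, Z2Nat.id by lia; reflexivity).
  exists (IZR (c (Z.to_nat k)) + f). split.
  - exists (Z.to_nat k). split; [lia|].
    unfold walk_segment. rewrite S_INR, Hj.
    replace (IZR (c (Z.to_nat k)) + f - IZR (c (Z.to_nat k))) with f by ring. lra.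
  - exists (Int_part x - c (Z.to_nat k))%Z. rewrite minus_IZR. unfold f. lra.
Qed.

(* Each step c_{j+1} - c_j of the walk is a difference of two points of the
   walk set: both segments j and j+1 contain a point at scaled position j+1. *)
Lemma walk_set_step_diff (j : nat) :
  (S j < N)%nat ->
  exists x y, walk_set x /\ walk_set y /\ x - y = IZR (c (S j) - c j).
Proof.
  intros Hj. pose proof INR_N_pos as HN.
  set (t := INR (S j) / INR N).
  assert (Ht : INR N * t = INR (S j)) by (unfold t; field; lra).
  exists (IZR (c (S j)) + t), (IZR (c j) + t). split; [|split].
  - exists (S j). split; [exact Hj|]. unfold walk_segment.
    replace (IZR (c (S j)) + t - IZR (c (S j))) with t by ring.
    rewrite Ht, (S_INR (S j)). lra.
  - exists j. split; [lia|]. unfold walk_segment.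
    replace (IZR (c j) + t - IZR (c j)) with t by ring.
    rewrite Ht, (S_INR j). lra.
  - rewrite minus_IZR. ring.
Qed.

(* Writing m = c_i - c_j + k, the integer N k is
   the difference of the scaled positions, so wrap_offset applies. *)
Lemma walk_set_int_diff (x y : R) (m : Z) :
  walk_set x -> walk_set y -> x - y = IZR m ->
  m = 0%Z \/
  exists j, (j < N)%nat /\ (m = (c (S j) - c j)%Z \/ m = (- (c (S j) - c j))%Z).
Proof.
  intros [i [Hi Hx]] [j [Hj Hy]] Hxy. unfold walk_segment in Hx, Hy.
  rewrite S_INR in Hx, Hy.
  set (k := (m - c i + c j)%Z).
  assert (Hscaled : IZR (Z.of_nat N * k)
                    = INR N * (x - IZR (c i)) - INR N * (y - IZR (c j))).
  { unfold k. rewrite mult_IZR, <- INR_IZR_INZ, plus_IZR, minus_IZR.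
    replace x with (y + IZR m) by lra. ring. }
  assert (Hk : (Z.of_nat i - Z.of_nat j - 1 <= Z.of_nat N * k
                <= Z.of_nat i - Z.of_nat j + 1)%Z).
  { rewrite (INR_IZR_INZ i) in Hx. rewrite (INR_IZR_INZ j) in Hy.
    split; apply le_IZR; rewrite Hscaled, ?plus_IZR, !minus_IZR; lra. }
  assert (Hm : m = (k + c i - c j)%Z) by (unfold k; lia).
  destruct (wrap_offset N i j k Hi Hj Hk)
    as [[-> [->|[->| ->]]] | [[-> [-> <-]] | [-> [<- ->]]]].
  - left. lia.
  - right. exists j. split; [lia|]. left. lia.
  - right. exists i. split; [lia|]. right. lia.
  - right. exists j. split; [lia|]. left. rewrite walk_wraps. lia.
  - right. exists i. split; [lia|]. right. rewrite walk_wraps. lia.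
Qed.

End WalkSet.

Section Arithmetic.

Local Open Scope Z_scope.

Definition zsum (l : list Z) : Z := fold_right Z.add 0 l.

Lemma zsum_app (l1 l2 : list Z) : zsum (l1 ++ l2) = zsum l1 + zsum l2.
Proof. induction l1 as [|d l1 IH]; cbn [app]; unfold zsum in *; simpl; lia. Qed.

Lemma zsum_opp (l : list Z) : zsum (map Z.opp l) = - zsum l.
Proof. induction l as [|d l IH]; unfold zsum in *; simpl; lia. Qed.

Lemma prefix_sum_step (L : list Z) (j : nat) :
  zsum (firstn (S j) L) - zsum (firstn j L) = nth j L 0.
Proof.
  revert j; induction L as [|d L IH]; intros j.
  - destruct j; reflexivity.
  - destruct j as [|j]; unfold zsum in *; simpl.
    + lia.
    + specialize (IH j). simpl in IH. lia.
Qed.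

Variable A : list nat.

Definition admissible (d : Z) : Prop := d = 0 \/ In (Z.abs_nat d) A.

Lemma admissible_opp (d : Z) : admissible d -> admissible (- d).
Proof.
  intros [H|H]; [left; lia | right].
  replace (Z.abs_nat (- d)) with (Z.abs_nat d) by lia. exact H.
Qed.

Lemma admissible_abs (n : nat) (d : Z) :
  admissible d -> (0 < n)%nat -> Z.of_nat n = d \/ Z.of_nat n = - d -> In n A.
Proof. intros [H|H] Hn Hnd; [lia|]. replace n with (Z.abs_nat d) by lia. exact H. Qed.

Definition reachable (z : Z) : Prop :=
  exists l, zsum l = z /\ Forall admissible l.

Lemma reachable_zero : reachable 0.
Proof. exists nil. split; [reflexivity | constructor]. Qed.

Lemma reachable_gen (a : nat) : In a A -> reachable (Z.of_nat a).
Proof.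
  intros Ha. exists (Z.of_nat a :: nil). split.
  - unfold zsum; simpl; lia.
  - constructor; [right; rewrite Zabs2Nat.id; exact Ha | constructor].
Qed.

Lemma reachable_add (z w : Z) : reachable z -> reachable w -> reachable (z + w).
Proof.
  intros [l [<- Hl]] [l' [<- Hl']]. exists (l ++ l'). split.
  - apply zsum_app.
  - apply Forall_app. split; assumption.
Qed.

Lemma reachable_opp (z : Z) : reachable z -> reachable (- z).
Proof.
  intros [l [<- Hl]]. exists (map Z.opp l). split.
  - apply zsum_opp.
  - apply Forall_map. apply Forall_impl with admissible; [apply admissible_opp | exact Hl].
Qed.

Lemma reachable_mul (k z : Z) : reachable z -> reachable (k * z).
Proof.
  intros Hz.
  assert (Hnat : forall n : nat, reachable (Z.of_nat n * z)).
  { induction n as [|n IH]; [exact reachable_zero|].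
    replace (Z.of_nat (S n) * z) with (z + Z.of_nat n * z) by lia.
    apply reachable_add; assumption. }
  destruct (Z_le_dec 0 k) as [Hk|Hk].
  - rewrite <- (Z2Nat.id k Hk). apply Hnat.
  - replace (k * z) with (- (Z.of_nat (Z.to_nat (- k)) * z)) by lia.
    apply reachable_opp, Hnat.
Qed.

End Arithmetic.

Local Open Scope Z_scope.

Lemma reachable_cons (A : list nat) (a : nat) (z : Z) :
  reachable A z -> reachable (a :: A) z.
Proof.
  intros [l [Hl Hadm]]. exists l. split; [exact Hl|].
  apply Forall_impl with (admissible A); [|exact Hadm].
  intros d [H|H]; [left | right; right]; exact H.
Qed.

Definition list_gcd (A : list nat) : Z :=
  fold_right (fun a g => Z.gcd (Z.of_nat a) g) 0 A.

(* Bézout: the gcd of A is a sum of admissible steps. *)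
Lemma reachable_list_gcd (A : list nat) : reachable A (list_gcd A).
Proof.
  induction A as [|a A IH]; [apply reachable_zero|]. simpl.
  destruct (Z.gcd_bezout (Z.of_nat a) (list_gcd A) _ eq_refl) as [u [v Huv]].
  rewrite <- Huv. apply reachable_add; apply reachable_mul.
  - apply reachable_gen. left; reflexivity.
  - apply reachable_cons, IH.
Qed.

Lemma list_gcd_divides (A : list nat) (a : nat) :
  In a A -> (list_gcd A | Z.of_nat a).
Proof.
  induction A as [|b A IH]; simpl; intros Ha; [contradiction|].
  destruct Ha as [<-|Ha]; [apply Z.gcd_divide_l|].
  apply Z.divide_trans with (list_gcd A); [apply Z.gcd_divide_r | exact (IH Ha)].
Qed.

Lemma list_gcd_nonneg (A : list nat) : 0 <= list_gcd A.
Proof. destruct A; simpl; [lia | apply Z.gcd_nonneg]. Qed.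

Lemma Z_divide_nat (d a : nat) : (Z.of_nat d | Z.of_nat a) -> Nat.divide d a.
Proof.
  intros [q Hq]. destruct d as [|d].
  - exists 0%nat. lia.
  - assert (0 <= q) by nia. exists (Z.to_nat q). apply Nat2Z.inj.
    rewrite Nat2Z.inj_mul, Z2Nat.id; lia.
Qed.

Lemma list_gcd_rel_prime (A : list nat) : rel_prime_set A -> list_gcd A = 1.
Proof.
  intros [_ Hcommon]. pose proof (list_gcd_nonneg A) as Hnonneg.
  assert (Hone : Z.to_nat (list_gcd A) = 1%nat).
  { apply Hcommon. intros a Ha. apply Z_divide_nat.
    rewrite Z2Nat.id by exact Hnonneg. apply list_gcd_divides, Ha. }
  lia.
Qed.

(* The walk of steps: first +a for each a ∈ A, then admissible steps bringing
   the total to -1 (possible since 1 is reachable), then a final 0 step so that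
   every a ∈ A is a non-final step. *)
Lemma admissible_walk (A : list nat) : rel_prime_set A ->
  exists L : list Z, zsum L = -1 /\ Forall (admissible A) L /\
    forall a, In a A -> exists j, (S j < length L)%nat /\ nth j L 0 = Z.of_nat a.
Proof.
  intros Hrp. set (S0 := zsum (map Z.of_nat A)).
  assert (Hreach : reachable A ((-1 - S0) * 1)).
  { apply reachable_mul. rewrite <- (list_gcd_rel_prime A Hrp). apply reachable_list_gcd. }
  destruct Hreach as [D [HD HadmD]].
  exists (map Z.of_nat A ++ D ++ 0 :: nil). split; [|split].
  - rewrite !zsum_app, HD. change (zsum (0 :: nil)) with 0. unfold S0. lia.
  - apply Forall_app. split; [|apply Forall_app; split; [exact HadmD | repeat constructor]].
    apply Forall_map, Forall_forall. intros a Ha. right. rewrite Zabs2Nat.id. exact Ha.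
  - intros a Ha. apply (in_map Z.of_nat) in Ha.
    destruct (In_nth _ _ 0 Ha) as [j [Hj Hnth]]. exists j. split.
    + rewrite !length_app. simpl. lia.
    + rewrite app_nth1 by exact Hj. exact Hnth.
Qed.

Local Open Scope R_scope.

(* Main theorem: K is the walk set of the prefix sums c_j of the walk of
   admissible_walk; c_N = zsum L = -1 = c_0 - 1. *)
Theorem mainTheorem4 (A : list nat)
  (Hpos : forall a, In a A -> (0 < a)%nat)
  (Hrp : rel_prime_set A) :
  exists K : R -> Prop, N_set K /\ forall n : nat, In n A <-> diff_pos_nat K n.
Proof.
  destruct (admissible_walk A Hrp) as [L [Hsum [Hadm Hcover]]].
  set (N := length L). set (c := fun j => zsum (firstn j L)).
  assert (HN : (0 < N)%nat) by (unfold N; destruct L; [discriminate | simpl; lia]).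
  assert (Hwrap : c N = (c 0%nat - 1)%Z) by (unfold c, N; rewrite firstn_all; simpl; lia).
  assert (Hstep : forall j, (c (S j) - c j)%Z = nth j L 0%Z) by apply prefix_sum_step.
  exists (walk_set N c). split; [split; [apply walk_set_compact | apply walk_set_covers]; exact HN|].
  intros n. split.
  -
    intros Hn. destruct (Hcover n Hn) as [j [Hj Hnth]].
    destruct (walk_set_step_diff N c HN j Hj) as [x [y [Hx [Hy Hxy]]]].
    split; [exact (Hpos n Hn)|]. exists x, y. repeat split; try assumption.
    rewrite Hxy, Hstep, Hnth, INR_IZR_INZ. reflexivity.
  -
    intros [Hn [x [y [Hx [Hy Hxy]]]]]. rewrite INR_IZR_INZ in Hxy.
    destruct (walk_set_int_diff N c HN Hwrap x y _ Hx Hy Hxy) as [H0 | [j [Hj Hm]]]; [lia|].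
    apply (admissible_abs A n (nth j L 0%Z)); [|exact Hn|rewrite <- Hstep; exact Hm].
    apply (proj1 (Forall_nth _ _) Hadm). exact Hj.
Qed.
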